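(* Let $\chi$ be the solution of the cell problem. (a) If $0<c_\psi\le\psi\le C_\psi$, then $\|\chi\|_{L^\infty(N,p)}\le\frac p2\frac{C_\psi}{c_\psi}$. (b) If in addition $\|D_X\psi\|_{L^\infty(N,p)}\le C'_\psi$, then \[ \max_{1\le i\le N}|D_X\psi^0(X_i)|\le\frac{C_\psi}{c_\psi}C'_\psi,\qquad \|D_X\chi\|_{L^\infty(N,p)}\le p\frac{C'_\psi}{c_\psi}. \]
   Context: Let $\epsilon>0$ and $N,p$ positive integers; $X_i=\epsilon i$, $Y_j=j$. Two-scale functions $g:\epsilon\mathbb Z\times\mathbb Z\to\mathbb R$ satisfy $g(X_{i+N},Y_j)=g(X_i,Y_j)=g(X_i,Y_{j+p})$; $D_Xg(X_i,Y_j)=(g(X_{i+1},Y_j)-g(X_i,Y_j))/\epsilon$, $D_Yg(X_i,Y_j)=g(X_i,Y_{j+1})-g(X_i,Y_j)$, $\langle g\rangle_Y(X_i)=\frac1p\sum_{j=1}^pg(X_i,Y_j)$, $\|g\|_{L^\infty(N,p)}=\max_{1\le i\le N,1\le j\le p}|g(X_i,Y_j)|$. $\psi$ is a two-scale function with $0<c_\psi\le\psi(X_i,Y_j)\le C_\psi$ for all $i,j$. The homogenized tensor is $\psi^0(X_i)=\langle1/\psi(X_i,\cdot)\rangle_Y^{-1}$, with $D_X\psi^0(X_i)=(\psi^0(X_{i+1})-\psi^0(X_i))/\epsilon$. The cell solution $\chi$ is the two-scale function with $\langle\chi(X_i,\cdot)\rangle_Y=0$ and $-D_Y(\psi D_Y\chi)=D_Y\psi$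 at every $(X_i,Y_j)$. *)

From mathcomp Require Import all_boot all_order all_algebra.
From mathcomp Require Import reals.
Set Implicit Arguments. Unset Strict Implicit. Unset Printing Implicit Defensive.
Import Order.TTheory GRing.Theory Num.Theory.
Local Open Scope ring_scope.

(* A two-scale function g(X_i, Y_j), X_i = eps*i, Y_j = j, is represented
   by its values indexed by (i, j) : int * int. *)
Section TwoScale.
Variable R : realType.

Definition two_scale (N p : nat) (g : int -> int -> R) : Prop :=
  forall i j : int, g (i + N%:Z) j = g i j /\ g i (j + p%:Z) = g i j.

Definition DX (eps : R) (g : int -> int -> R) : int -> int -> R :=
  fun i j => (g (i + 1) j - g i j) / eps.

Definition DY (g : int -> int -> R) : int -> int -> R :=
  fun i j => g i (j + 1) - g i j.

Definition avgY (p : nat) (g : int -> int -> R) (i : int) : R :=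
  (p%:R)^-1 * \sum_(j < p) g i (j.+1)%:Z.

Definition Linf (N p : nat) (g : int -> int -> R) : R :=
  \big[Num.max/0]_(i < N) \big[Num.max/0]_(j < p) `|g (i.+1)%:Z (j.+1)%:Z|.

Definition psi0 (p : nat) (psi : int -> int -> R) (i : int) : R :=
  (avgY p (fun i j => (psi i j)^-1) i)^-1.

Definition DXpsi0 (eps : R) (p : nat) (psi : int -> int -> R) (i : int) : R :=
  (psi0 p psi (i + 1) - psi0 p psi i) / eps.

Definition cell_solution (N p : nat) (psi chi : int -> int -> R) : Prop :=
  two_scale N p chi /\
  (forall i : int, avgY p chi i = 0) /\
  (forall i j : int,
     - DY (fun i j => psi i j * DY chi i j) i j = DY psi i j).

End TwoScale.

From mathcomp Require Import all_boot all_order all_algebra.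
From mathcomp Require Import reals ring lra.
Import Order.TTheory GRing.Theory Num.Theory.
Local Open Scope ring_scope.

(* The cell equation says that the flux psi (D_Y chi + 1) is constant in Y, and
   summing D_Y chi over a period identifies that constant as the harmonic mean
   psi^0; hence D_Y chi = psi^0 / psi - 1, of size at most C/c.  A periodic
   sequence of zero mean is bounded by half of its total variation over a period,
   which gives (a).  For (b), moving psi by at most eps C' in X moves the harmonic
   mean by a relative amount eps C'/c and the weights psi^0 / psi by a total of
   at most 2 p eps C'/c; the total-variation bound applied to the zero-mean
   periodic sequence chi(X_{i+1}, .) - chi(X_i, .) then bounds D_X chi. *)

Definition tvar {R : realFieldType} (p : nat) (u : nat -> R) : R :=
  \sum_(l < p) `|u l.+2 - u l.+1|.

Section PeriodicSequences.
Context {R : realFieldType}.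
Implicit Types (u : nat -> R) (p : nat).

Lemma tvarE p u : tvar p u = \sum_(1 <= l < p.+1) `|u l.+1 - u l|.
Proof. by rewrite /tvar big_add1 /= big_mkord. Qed.

Lemma telescope_sumr_succ p u : \sum_(l < p) (u l.+2 - u l.+1) = u p.+1 - u 1.
Proof. by rewrite -telescope_sumr // big_add1 /= big_mkord. Qed.

Lemma tvar_ge_dist2 p u j k : u p.+1 = u 1 -> (0 < j)%N -> (j <= k <= p)%N ->
  2 * `|u k - u j| <= tvar p u.
Proof.
move=> per j_gt0 /andP[jk kp].
pose d l := u l.+1 - u l.
have arc a b : (a <= b)%N -> \sum_(a <= l < b) d l = u b - u a.
  exact: telescope_sumr.
have -> : tvar p u = \sum_(1 <= l < j) `|d l| + \sum_(j <= l < k) `|d l|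
                     + \sum_(k <= l < p.+1) `|d l|.
  by rewrite tvarE -!big_cat_nat // ?(leq_trans j_gt0 jk) // leqW.
have inner : `|u k - u j| <= \sum_(j <= l < k) `|d l|.
  by rewrite -arc //; apply: ler_norm_sum.
(* by periodicity, u k - u j is also minus the sum over the complementary arcs *)
have outer : `|u k - u j| <= \sum_(1 <= l < j) `|d l| + \sum_(k <= l < p.+1) `|d l|.
  have -> : u k - u j = - (\sum_(1 <= l < j) d l + \sum_(k <= l < p.+1) d l).
    by rewrite !arc // ?per ?leqW //; ring.
  rewrite normrN; apply: le_trans (ler_normD _ _) _.
  by apply: lerD; apply: ler_norm_sum.
lra.
Qed.

Lemma zero_mean_periodic_le_tvar p u j : u p.+1 = u 1 ->
  \sum_(k < p) u k.+1 = 0 -> (j < p)%N -> `|u j.+1| <= tvar p u / 2.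
Proof.
move=> per mean jp.
have dist k : (k < p)%N -> `|u j.+1 - u k.+1| <= tvar p u / 2.
  move=> kp; case: (leqP j k) => [jk | kj].
  - have := tvar_ge_dist2 p u j.+1 k.+1 per isT; rewrite ltnS jk kp distrC.
    by move/(_ isT); lra.
  - have := tvar_ge_dist2 p u k.+1 j.+1 per isT; rewrite ltnS (ltnW kj) jp.
    by move/(_ isT); lra.
have p_gt0 : (0 < p)%N by exact: leq_ltn_trans jp.
have avg : u j.+1 *+ p = \sum_(k < p) (u j.+1 - u k.+1).
  by rewrite sumrB mean subr0 sumr_const card_ord.
rewrite -(ler_pMn2r p_gt0) -normrMn avg.
apply: le_trans (ler_norm_sum _ _ _) _.
apply: le_trans (_ : _ <= \sum_(k < p) (tvar p u / 2)) _.
  by apply: ler_sum => k _; apply: dist.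
by rewrite sumr_const card_ord.
Qed.

End PeriodicSequences.

Lemma dist_inv_le (R : realFieldType) (c d x y : R) :
  0 < c -> c <= x -> 0 < y -> `|y - x| <= d -> `|x^-1 - y^-1| <= d / c * y^-1.
Proof.
move=> c_gt0 cx y_gt0 yx.
have x_gt0 : 0 < x := lt_le_trans c_gt0 cx.
have -> : x^-1 - y^-1 = (y - x) / x * y^-1 by field; rewrite !gt_eqF.
rewrite normrM (gtr0_norm (_ : 0 < y^-1)) ?invr_gt0 // normrM normfV (gtr0_norm x_gt0).
apply: ler_wpM2r; first by rewrite invr_ge0 ltW.
have inv_le : x^-1 <= c^-1 by rewrite lef_pV2 ?posrE.
by apply: ler_pM; rewrite // invr_ge0 ltW.
Qed.

Lemma ratio_sub1_le (R : realFieldType) (c C x y : R) :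
  0 < c -> c <= x <= C -> c <= y <= C -> `|x / y - 1| <= C / c.
Proof.
move=> c_gt0 /andP[cx xC] /andP[cy yC].
have y_gt0 : 0 < y := lt_le_trans c_gt0 cy.
have x_gt0 : 0 < x := lt_le_trans c_gt0 cx.
have inv_le : y^-1 <= c^-1 by rewrite lef_pV2 ?posrE.
have xy_le : x / y <= C / c by apply: ler_pM => //; rewrite ?invr_ge0 ltW.
have xy_ge0 : 0 <= x / y by rewrite divr_ge0 // ltW.
have Cc_ge1 : 1 <= C / c by rewrite ler_pdivlMr // mul1r (le_trans cy).
by rewrite ler_norml; apply/andP; split; lra.
Qed.

Definition hmean {R : realFieldType} (p : nat) (a : nat -> R) : R :=
  p%:R / \sum_(l < p) (a l)^-1.

Section HarmonicMean.
Context {R : realFieldType} {p : nat}.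
Hypothesis p_gt0 : (0 < p)%N.
Implicit Types (a b : nat -> R) (c C d : R).

Lemma sum_inv_gt0 a : (forall l, (l < p)%N -> 0 < a l) -> 0 < \sum_(l < p) (a l)^-1.
Proof.
move=> a_gt0; case: p p_gt0 a_gt0 => // n _ a_gt0.
rewrite big_ord_recl ltr_wpDr ?invr_gt0 ?a_gt0 //.
by apply: sumr_ge0 => l _; rewrite invr_ge0 ltW ?a_gt0.
Qed.

Lemma hmean_mul_sum a : (forall l, (l < p)%N -> 0 < a l) ->
  hmean p a * \sum_(l < p) (a l)^-1 = p%:R.
Proof. by move=> a_gt0; rewrite /hmean divfK // gt_eqF ?sum_inv_gt0. Qed.

Lemma hmean_bounds c C a : 0 < c -> (forall l, (l < p)%N -> c <= a l <= C) ->
  c <= hmean p a <= C.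
Proof.
move=> c_gt0 a_bnd.
have a_gt0 l : (l < p)%N -> 0 < a l.
  by move=> lp; have /andP[+ _] := a_bnd l lp; apply: lt_le_trans.
have S_gt0 := sum_inv_gt0 _ a_gt0.
have S_le : c * \sum_(l < p) (a l)^-1 <= p%:R.
  rewrite mulr_sumr -[in p%:R](card_ord p) -sumr_const.
  apply: ler_sum => l _.
  by rewrite ler_pdivrMr ?a_gt0 // mul1r; case/andP: (a_bnd l (ltn_ord l)).
have S_ge : p%:R <= C * \sum_(l < p) (a l)^-1.
  rewrite mulr_sumr -[in p%:R](card_ord p) -sumr_const.
  apply: ler_sum => l _.
  by rewrite ler_pdivlMr ?a_gt0 // mul1r; case/andP: (a_bnd l (ltn_ord l)).
by rewrite /hmean ler_pdivlMr // ler_pdivrMr // S_le S_ge.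
Qed.

Section Perturbation.
Context {c d : R} {a b : nat -> R}.
Hypotheses (c_gt0 : 0 < c) (c_le_a : forall l, (l < p)%N -> c <= a l).
Hypotheses (b_gt0 : forall l, (l < p)%N -> 0 < b l).
Hypothesis ab_dist : forall l, (l < p)%N -> `|b l - a l| <= d.

Let a_gt0 l : (l < p)%N -> 0 < a l.
Proof. by move=> lp; apply: lt_le_trans (c_le_a _ lp). Qed.

Let inv_dist : \sum_(l < p) `|(a l)^-1 - (b l)^-1| <= d / c * \sum_(l < p) (b l)^-1.
Proof.
rewrite mulr_sumr; apply: ler_sum => l _.
by apply: dist_inv_le; rewrite ?c_le_a ?b_gt0 ?ab_dist.
Qed.

Lemma hmean_dist : `|hmean p b - hmean p a| <= hmean p a * (d / c).
Proof.
set A := \sum_(l < p) (a l)^-1; set B := \sum_(l < p) (b l)^-1.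
have A_gt0 : 0 < A := sum_inv_gt0 _ a_gt0.
have B_gt0 : 0 < B := sum_inv_gt0 _ b_gt0.
have ha_ge0 : 0 <= hmean p a by rewrite divr_ge0 // ltW.
have AB : `|A - B| <= d / c * B.
  by rewrite /A /B -sumrB; apply: le_trans (ler_norm_sum _ _ _) inv_dist.
have -> : hmean p b - hmean p a = hmean p a * ((A - B) / B).
  by rewrite /hmean -/A -/B; field; rewrite !gt_eqF.
rewrite normrM (ger0_norm ha_ge0); apply: ler_wpM2l => //.
by rewrite normrM normfV (gtr0_norm B_gt0) ler_pdivrMr.
Qed.

Lemma sum_dist_hmean_ratio :
  \sum_(l < p) `|hmean p b / b l - hmean p a / a l| <= 2 * (p%:R * (d / c)).
Proof.
set A := \sum_(l < p) (a l)^-1; set B := \sum_(l < p) (b l)^-1.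
have hb_ge0 : 0 <= hmean p b by rewrite divr_ge0 // ltW // sum_inv_gt0.
apply: le_trans (_ : _ <= hmean p b * \sum_(l < p) `|(a l)^-1 - (b l)^-1|
                          + `|hmean p b - hmean p a| * A) _.
  rewrite /A !mulr_sumr -big_split /=; apply: ler_sum => l _.
  have -> : hmean p b / b l - hmean p a / a l
            = hmean p b * ((b l)^-1 - (a l)^-1) + (hmean p b - hmean p a) * (a l)^-1 by ring.
  apply: le_trans (ler_normD _ _) _.
  rewrite normrM (ger0_norm hb_ge0) normrM normfV distrC.
  by rewrite (gtr0_norm (a_gt0 _ (ltn_ord l))).
have := ler_wpM2l hb_ge0 inv_dist.
have := ler_wpM2r (ltW (sum_inv_gt0 _ a_gt0)) hmean_dist.
have eA : hmean p a * (d / c) * A = p%:R * (d / c).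
  by rewrite /A -(hmean_mul_sum _ a_gt0); ring.
have eB : hmean p b * (d / c * B) = p%:R * (d / c).
  by rewrite /B -(hmean_mul_sum _ b_gt0); ring.
rewrite -/A -/B; lra.
Qed.
End Perturbation.
End HarmonicMean.

Lemma DY_nat {R : realType} (g : int -> int -> R) i (n : nat) :
  DY g i n%:Z = g i n.+1%:Z - g i n%:Z.
Proof. by rewrite /DY -PoszD addn1. Qed.

Lemma normr_DX {R : realType} (eps : R) g i j : 0 < eps ->
  `|DX eps g i j| = `|g (i + 1) j - g i j| / eps.
Proof. by move=> eps_gt0; rewrite /DX normrM normfV (gtr0_norm eps_gt0). Qed.

Lemma Linf_leP {R : realType} N p (g : int -> int -> R) (M : R) :
  reflect (0 <= M /\ forall (i : 'I_N) (j : 'I_p), `|g i.+1%:Z j.+1%:Z| <= M)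
          (Linf N p g <= M).
Proof.
apply: (iffP idP) => [/bigmax_leP[M_ge0 g_bnd] | [M_ge0 g_bnd]].
  by split=> // i j; have /bigmax_leP[_ ->] := g_bnd i isT.
apply/bigmax_leP; split=> // i _.
by apply/bigmax_leP; split=> // j _; apply: g_bnd.
Qed.

Lemma psi0E {R : realType} p (psi : int -> int -> R) i :
  psi0 p psi i = hmean p (fun l => psi i l.+1%:Z).
Proof. by rewrite /psi0 /avgY /hmean invfM invrK mulrC. Qed.

Section CellProblem.
Context {R : realType} {N p : nat} {psi chi : int -> int -> R}.
Hypotheses (p_gt0 : (0 < p)%N) (psi_gt0 : forall i j, 0 < psi i j).
Hypothesis chi_cell : cell_solution N p psi chi.

Lemma cell_periodic i : chi i p.+1%:Z = chi i 1.
Proof.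
by have [chi_per _] := chi_cell; have := (chi_per i 1).2; rewrite addrC -PoszD addn1.
Qed.

Lemma cell_mean i : \sum_(k < p) chi i k.+1%:Z = 0.
Proof.
have [_ [chi_avg _]] := chi_cell; have /eqP := chi_avg i.
by rewrite /avgY mulf_eq0 invr_eq0 pnatr_eq0 gtn_eqF //= => /eqP.
Qed.

Lemma cell_flux_const i n :
  psi i n.+1%:Z * (DY chi i n.+1%:Z + 1) = psi i 1 * (DY chi i 1 + 1).
Proof.
have [_ [_ chi_eq]] := chi_cell.
elim: n => // n IHn; rewrite -IHn.
by have := chi_eq i n.+1%:Z; rewrite /DY /= -!PoszD !addn1; lra.
Qed.

Lemma cell_DY i n : DY chi i n.+1%:Z = psi0 p psi i / psi i n.+1%:Z - 1.
Proof.
set K := psi i 1 * (DY chi i 1 + 1).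
have DYE m : DY chi i m.+1%:Z = K / psi i m.+1%:Z - 1.
  by rewrite /K -(cell_flux_const i m); field; rewrite gt_eqF.
have DY_sum : \sum_(l < p) DY chi i l.+1%:Z = 0.
  under eq_bigr do rewrite DY_nat.
  by rewrite (telescope_sumr_succ p (fun n : nat => chi i n%:Z)) cell_periodic subrr.
have KS : K * \sum_(l < p) (psi i l.+1%:Z)^-1 = p%:R.
  move: DY_sum; under eq_bigr do rewrite DYE.
  by rewrite sumrB -mulr_sumr sumr_const card_ord => /eqP; rewrite subr_eq0 => /eqP.
have S_gt0 := sum_inv_gt0 p_gt0 (fun l => psi i l.+1%:Z) (fun l _ => psi_gt0 _ _).
by rewrite DYE psi0E /hmean -KS mulfK // gt_eqF.
Qed.

Section Bounds.
Context {c C : R}.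
Hypotheses (c_gt0 : 0 < c) (psi_bnd : forall i j, c <= psi i j <= C).

Lemma psi0_bounds i : c <= psi0 p psi i <= C.
Proof. by rewrite psi0E; apply: hmean_bounds => // l _; apply: psi_bnd. Qed.

Lemma cell_solution_bound i j : (j < p)%N -> `|chi i j.+1%:Z| <= p%:R / 2 * (C / c).
Proof.
move=> jp; set u := fun n : nat => chi i n%:Z.
have tvar_le : tvar p u <= p%:R * (C / c).
  apply: le_trans (_ : _ <= \sum_(l < p) (C / c)) _; last first.
    by rewrite sumr_const card_ord mulr_natl.
  apply: ler_sum => l _; rewrite -(DY_nat chi) cell_DY.
  by apply: ratio_sub1_le; rewrite ?psi0_bounds ?psi_bnd.
have := zero_mean_periodic_le_tvar p u j (cell_periodic i) (cell_mean i) jp.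
rewrite -/u; lra.
Qed.

Section XLipschitz.
Context {eps C' : R} {i : int}.
Hypothesis eps_gt0 : 0 < eps.
Hypothesis psi_lip : forall l, (l < p)%N -> `|psi (i + 1) l.+1%:Z - psi i l.+1%:Z| <= eps * C'.

Let c_le_row k l : (l < p)%N -> c <= psi k l.+1%:Z.
Proof. by move=> _; case/andP: (psi_bnd k l.+1%:Z). Qed.

Lemma DXpsi0_bound : `|DXpsi0 eps p psi i| <= C / c * C'.
Proof.
rewrite /DXpsi0 normrM normfV (gtr0_norm eps_gt0) ler_pdivrMr // !psi0E.
have -> : C / c * C' * eps = C * (eps * C' / c) by ring.
have d_ge0 : 0 <= eps * C' := le_trans (normr_ge0 _) (psi_lip _ p_gt0).
have /andP[_ hmean_le] := psi0_bounds i; rewrite psi0E in hmean_le.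
apply: le_trans (hmean_dist p_gt0 c_gt0 (c_le_row i) (fun l _ => psi_gt0 _ _) psi_lip) _.
by apply: ler_wpM2r hmean_le; rewrite divr_ge0 // ltW.
Qed.

Lemma DXchi_bound j : (j < p)%N -> `|DX eps chi i j.+1%:Z| <= p%:R * (C' / c).
Proof.
move=> jp; set v := fun n : nat => chi (i + 1) n%:Z - chi i n%:Z.
have v_per : v p.+1 = v 1 by rewrite /v !cell_periodic.
have v_mean : \sum_(k < p) v k.+1 = 0 by rewrite sumrB !cell_mean subr0.
have tvar_le : tvar p v <= 2 * (p%:R * (eps * C' / c)).
  rewrite /tvar (eq_bigr (fun l : 'I_p =>
    `|hmean p (fun n => psi (i + 1) n.+1%:Z) / psi (i + 1) l.+1%:Z
      - hmean p (fun n => psi i n.+1%:Z) / psi i l.+1%:Z|)); last first.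
    move=> l _; congr `|_|; rewrite /v.
    have := cell_DY (i + 1) l; have := cell_DY i l.
    rewrite !DY_nat !psi0E; lra.
  exact: (sum_dist_hmean_ratio p_gt0 c_gt0 (c_le_row i) (fun l _ => psi_gt0 _ _) psi_lip).
have := zero_mean_periodic_le_tvar p v j v_per v_mean jp.
rewrite normr_DX // ler_pdivrMr // -/(v j.+1).
have -> : p%:R * (C' / c) * eps = p%:R * (eps * C' / c) by ring.
lra.
Qed.

End XLipschitz.
End Bounds.
End CellProblem.

Theorem lemma4p3 (R : realType) (eps : R) (N p : nat)
  (psi chi : int -> int -> R) (c_psi C_psi C'_psi : R) :
  0 < eps -> (0 < N)%N -> (0 < p)%N ->
  two_scale N p psi ->
  0 < c_psi ->
  (forall i j : int, c_psi <= psi i j <= C_psi) ->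
  cell_solution N p psi chi ->
  Linf N p chi <= (p%:R / 2) * (C_psi / c_psi) /\
  (Linf N p (DX eps psi) <= C'_psi ->
     \big[Num.max/0]_(i < N) `|DXpsi0 eps p psi (i.+1)%:Z| <= (C_psi / c_psi) * C'_psi /\
     Linf N p (DX eps chi) <= p%:R * (C'_psi / c_psi)).
Proof.
move=> eps_gt0 _ p_gt0 _ c_gt0 psi_bnd chi_cell.
have psi_gt0 i j : 0 < psi i j.
  by case/andP: (psi_bnd i j) => /(lt_le_trans c_gt0).
have Cc_ge0 : 0 <= C_psi / c_psi.
  have /andP[c_le C_ge] := psi_bnd 0 0.
  by rewrite divr_ge0 // ltW // (lt_le_trans c_gt0 (le_trans c_le C_ge)).
split.
  apply/Linf_leP; split=> [|i j]; first by rewrite mulr_ge0 // divr_ge0.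
  exact: (cell_solution_bound p_gt0 psi_gt0 chi_cell c_gt0 psi_bnd _ _ (ltn_ord j)).
move=> /Linf_leP[C'_ge0 DXpsi_bnd].
have psi_lip (i : 'I_N) l : (l < p)%N ->
    `|psi (i.+1%:Z + 1) l.+1%:Z - psi i.+1%:Z l.+1%:Z| <= eps * C'_psi.
  by move=> lp; have := DXpsi_bnd i (Ordinal lp); rewrite normr_DX // ler_pdivrMr // mulrC.
split.
  apply: bigmax_le => [|i _]; first exact: mulr_ge0.
  exact: (DXpsi0_bound p_gt0 psi_gt0 c_gt0 psi_bnd eps_gt0 (psi_lip i)).
apply/Linf_leP; split=> [|i j]; first by rewrite mulr_ge0 // divr_ge0 // ltW.
exact: (DXchi_bound p_gt0 psi_gt0 chi_cell c_gt0 psi_bnd eps_gt0 (psi_lip i) _ (ltn_ord j)).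
Qed.
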